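(* Fix the data $N\ge 1$, $\hat s\in\{0,1\}^N$, $\hat y\in\{0,1\}^N$, $p\in\mathbb{R}_{\ge 0}^N$ and $\epsilon\ge 0$, and let $\mathcal{RC}$ and $\mathcal{RC}_\mathcal{E}$ be the two optimization problems defined in the context. Then the two problems have the same optimal solutions, in the following sense: (i) $\mathcal{RC}$ is feasible if and only if $\mathcal{RC}_\mathcal{E}$ is feasible, and in that case their optimal objective values coincide; (ii) for every optimal solution $(s_{01}^+,s_{10}^+,s_{01}^-,s_{10}^-)$ of $\mathcal{RC}_\mathcal{E}$, every vector $s^*$ obtained from it by the post-processing $\Phi$ is an optimal solution of $\mathcal{RC}$; (iii) every optimal solution $s^*$ of $\mathcal{RC}$ is obtained by the post-processing $\Phi$ from some optimal solution of $\mathcal{RC}_\mathcal{E}$ (namely from the tuple counting, in each of the four groups, how many entries of $\hat s$ were flipped in $s^*$).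
   Context: Data: an integer $N\ge1$; an initial guess $\hat s=(\hat s_1,\dots,\hat s_N)\in\{0,1\}^N$ of a binary sensitive attribute; predictions $\hat y=(\hat y_1,\dots,\hat y_N)\in\{0,1\}^N$; confidence weights $p=(p_1,\dots,p_N)$ with $p_i\ge0$; a tolerance $\epsilon\ge0$. Let $\bar y=\frac1N\sum_{i=1}^N\hat y_i$. Problem $\mathcal{RC}$ (general model): variables $s^*=(s^*_1,\dots,s^*_N)\in\{0,1\}^N$; minimize $\sum_{i=1}^N p_i(1-\hat s_i)s^*_i+\sum_{i=1}^N p_i\hat s_i(1-s^*_i)$ subject to $\sum_i s^*_i>0$, $\sum_i(1-s^*_i)>0$, $-\epsilon\le \bar y-\frac{\sum_i \hat y_i s^*_i}{\sum_i s^*_i}\le\epsilon$ and $-\epsilon\le \bar y-\frac{\sum_i \hat y_i (1-s^*_i)}{\sum_i (1-s^*_i)}\le\epsilon$ (statistical parity constraints). Four groups of indices: $G_1^+=\{i:\hat s_i=1,\hat y_i=1\}$, $G_0^+=\{i:\hat s_i=0,\hat y_i=1\}$, $G_1^-=\{i:\hat s_i=1,\hat y_i=0\}$, $G_0^-=\{i:\hat s_i=0,\hat y_i=0\}$, with cardinalities $n_1^+,n_0^+,n_1^-,n_0^-$. For each group $G$ with $|G|=n$, define the array $T_G[k]$ for $k=0,\dots,n$ as the sum of the $k$ smallest values among $\{p_i:i\in G\}$ (so $T_G[0]=0$); write $T_{1^+},T_{0^+},T_{1^-},T_{0^-}$. Problem $\mathcal{RC}_\mathcal{E}$ (efficient model):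 integer variables $s_{01}^+\in[0,n_0^+]$, $s_{10}^+\in[0,n_1^+]$, $s_{01}^-\in[0,n_0^-]$, $s_{10}^-\in[0,n_1^-]$; minimize $T_{0^+}[s_{01}^+]+T_{1^+}[s_{10}^+]+T_{0^-}[s_{01}^-]+T_{1^-}[s_{10}^-]$ subject to $n_0^++n_0^--s_{01}^+-s_{01}^-+s_{10}^++s_{10}^->0$, $n_1^++n_1^--s_{10}^+-s_{10}^-+s_{01}^++s_{01}^->0$, $-\epsilon\le\bar y-\frac{n_1^+-s_{10}^++s_{01}^+}{n_1^++n_1^--s_{10}^+-s_{10}^-+s_{01}^++s_{01}^-}\le\epsilon$, $-\epsilon\le\bar y-\frac{n_0^+-s_{01}^++s_{10}^+}{n_0^++n_0^--s_{01}^+-s_{01}^-+s_{10}^++s_{10}^-}\le\epsilon$. Post-processing $\Phi$: given a tuple $(s_{01}^+,s_{10}^+,s_{01}^-,s_{10}^-)$, obtain $s^*$ from $\hat s$ by flipping (changing $\hat s_i$ to $1-\hat s_i$) exactly $s_{01}^+$ indices of $G_0^+$, $s_{10}^+$ of $G_1^+$, $s_{01}^-$ of $G_0^-$ and $s_{10}^-$ of $G_1^-$, where in each group the flipped indices are ones with the smallest confidence values $p_i$ (ties broken arbitrarily, so the flipped set's total weight in group $G$ with $k$ flips equals $T_G[k]$); all other entries keep their value $\hat s_i$. *)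

From mathcomp Require Import all_boot all_order all_algebra.
Set Implicit Arguments. Unset Strict Implicit. Unset Printing Implicit Defensive.
Import Order.TTheory GRing.Theory Num.Theory.
Local Open Scope ring_scope.

Definition b2R {R : realFieldType} (b : bool) : R := (b : nat)%:R.

Definition ybar {R : realFieldType} (N : nat) (yhat : 'I_N -> bool) : R :=
  (\sum_i b2R (yhat i)) / N%:R.

Definition cost_RC (R : realFieldType) (N : nat) (shat yhat : 'I_N -> bool)
    (p : 'I_N -> R) (eps : R) (s : 'I_N -> bool) : R :=
  \sum_i p i * (1 - b2R (shat i)) * b2R (s i)
  + \sum_i p i * b2R (shat i) * (1 - b2R (s i)).

Definition feasible_RC (R : realFieldType) (N : nat) (shat yhat : 'I_N -> bool)
    (p : 'I_N -> R) (eps : R) (s : 'I_N -> bool) : Prop :=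
  let n1 : R := \sum_i b2R (s i) in
  let n0 : R := \sum_i (1 - b2R (s i)) in
  [/\ 0 < n1, 0 < n0,
      - eps <= ybar (R := R) yhat - (\sum_i b2R (yhat i) * b2R (s i)) / n1 <= eps
    & - eps <= ybar (R := R) yhat - (\sum_i b2R (yhat i) * (1 - b2R (s i))) / n0 <= eps].

Definition optimal_RC (R : realFieldType) (N : nat) (shat yhat : 'I_N -> bool)
    (p : 'I_N -> R) (eps : R) (s : 'I_N -> bool) : Prop :=
  feasible_RC shat yhat p eps s /\
  forall s', feasible_RC shat yhat p eps s' ->
    cost_RC shat yhat p eps s <= cost_RC shat yhat p eps s'.

Definition inG (N : nat) (shat yhat : 'I_N -> bool) (a b : bool) (i : 'I_N)
  : bool := (shat i == a) && (yhat i == b).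

Definition ncard (N : nat) (shat yhat : 'I_N -> bool) (a b : bool) : nat :=
  #|[pred i | inG shat yhat a b i]|.

Definition Tsum (R : realFieldType) (N : nat) (shat yhat : 'I_N -> bool)
    (p : 'I_N -> R) (a b : bool) (k : nat) : R :=
  \sum_(x <- take k (sort <=%R [seq p i | i <- enum 'I_N & inG shat yhat a b i])) x.

(* ---------- the efficient model RC_E ----------
   k01p = s_01^+ (flips in G_0^+), k10p = s_10^+ (flips in G_1^+),
   k01m = s_01^- (flips in G_0^-), k10m = s_10^- (flips in G_1^-). *)
Definition cost_RCE (R : realFieldType) (N : nat) (shat yhat : 'I_N -> bool)
    (p : 'I_N -> R) (eps : R) (k01p k10p k01m k10m : nat) : R :=
  Tsum shat yhat p false true k01p + Tsum shat yhat p true true k10p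
  + Tsum shat yhat p false false k01m + Tsum shat yhat p true false k10m.

Definition feasible_RCE (R : realFieldType) (N : nat) (shat yhat : 'I_N -> bool)
    (p : 'I_N -> R) (eps : R) (k01p k10p k01m k10m : nat) : Prop :=
  let n1p : R := (ncard shat yhat true true)%:R in
  let n0p : R := (ncard shat yhat false true)%:R in
  let n1m : R := (ncard shat yhat true false)%:R in
  let n0m : R := (ncard shat yhat false false)%:R in
  let D0 : R := n0p + n0m - k01p%:R - k01m%:R + k10p%:R + k10m%:R in
  let D1 : R := n1p + n1m - k10p%:R - k10m%:R + k01p%:R + k01m%:R in
  [/\ [&& (k01p <= ncard shat yhat false true)%N,
          (k10p <= ncard shat yhat true true)%N,
          (k01m <= ncard shat yhat false false)%N &
          (k10m <= ncard shat yhat true false)%N],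
      0 < D0, 0 < D1,
      - eps <= ybar (R := R) yhat - (n1p - k10p%:R + k01p%:R) / D1 <= eps
    & - eps <= ybar (R := R) yhat - (n0p - k01p%:R + k10p%:R) / D0 <= eps].

Definition optimal_RCE (R : realFieldType) (N : nat) (shat yhat : 'I_N -> bool)
    (p : 'I_N -> R) (eps : R) (k01p k10p k01m k10m : nat) : Prop :=
  feasible_RCE shat yhat p eps k01p k10p k01m k10m /\
  forall l01p l10p l01m l10m, feasible_RCE shat yhat p eps l01p l10p l01m l10m ->
    cost_RCE shat yhat p eps k01p k10p k01m k10m
      <= cost_RCE shat yhat p eps l01p l10p l01m l10m.

(* Since every index lies in exactly one group, all
   non-flipped entries keep the value shat_i. *)
Definition phi_group (R : realFieldType) (N : nat) (shat yhat : 'I_N -> bool)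
    (p : 'I_N -> R) (a b : bool) (k : nat) (s : 'I_N -> bool) : Prop :=
  #|[pred i | inG shat yhat a b i && (s i != shat i)]| = k /\
  forall i j, inG shat yhat a b i -> inG shat yhat a b j ->
    s i != shat i -> s j = shat j -> p i <= p j.

Definition is_Phi (R : realFieldType) (N : nat) (shat yhat : 'I_N -> bool)
    (p : 'I_N -> R) (eps : R) (k01p k10p k01m k10m : nat) (s : 'I_N -> bool)
  : Prop :=
  [/\ phi_group shat yhat p false true k01p s,
      phi_group shat yhat p true true k10p s,
      phi_group shat yhat p false false k01m s &
      phi_group shat yhat p true false k10m s].

From mathcomp Require Import all_boot all_order all_algebra.
From mathcomp Require Import ring lra.
From Stdlib Require Import ClassicalEpsilon.
Set Implicit Arguments. Unset Strict Implicit. Unset Printing Implicit Defensive.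
Import Order.TTheory GRing.Theory Num.Theory.
Local Open Scope ring_scope.

(* A vector s^* enters both problems only through its sets of flipped indices
   in the four groups: the parity constraints depend only on their
   cardinalities, and the cost of s^* is their total weight.  By an exchange
   argument, k flipped indices of a group weigh at least T_G[k], with equality
   exactly when they carry the k smallest weights of the group.  Hence
   minimizing over s^* amounts to minimizing over the four counts, and the
   optimal vectors are exactly the images under Phi of optimal counts. *)

Lemma ex_argmin (T : finType) (R : realDomainType) (P : T -> Prop) (F : T -> R) :
  (exists x, P x) -> exists2 x, P x & forall y, P y -> F x <= F y.
Proof.
case=> x0 Px0.
pose b y : bool := if excluded_middle_informative (P y) then true else false.
have bP y : reflect (P y) (b y).
  by rewrite /b; case: excluded_middle_informative => ?; constructor.
case: (arg_minP F (introT (bP x0) Px0)) => x /bP Px minx.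
by exists x => // y /bP; apply: minx.
Qed.

Section SmallestSum.
Variables (T : finType) (R : realDomainType) (p : T -> R) (g : pred T).

Definition smallest_sum k := \sum_(x <- take k (sort <=%R [seq p i | i <- enum T & g i])) x.

Definition lowest (X : {set T}) :=
  forall i j, i \in X -> g j -> j \notin X -> p i <= p j.

Lemma smallest_sum_lowest (X : {set T}) :
  X \subset g -> lowest X -> smallest_sum #|X| = \sum_(i in X) p i.
Proof.
move=> /subsetP sXg lowX; pose Y := [set i | g i & i \notin X].
set sX := [seq p i | i <- enum X]; set sY := [seq p i | i <- enum Y].
have perm_split : perm_eq [seq p i | i <- enum T & g i] (sX ++ sY).
  rewrite -map_cat; apply/perm_map/uniq_perm.
  - by rewrite filter_uniq ?enum_uniq.
  - rewrite cat_uniq !enum_uniq /= andbT; apply/hasPn => i.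
    by rewrite !mem_enum !inE => /andP[].
  - move=> i; rewrite mem_filter mem_cat !mem_enum !inE andbT.
    by case: (boolP (i \in X)) => [/sXg|] //=; rewrite andbT.
(* X is lowest, so sorting the values of g puts those of X first. *)
have sort_split : sort <=%R [seq p i | i <- enum T & g i] = sort <=%R sX ++ sort <=%R sY.
  apply: le_sorted_eq; [exact/sort_sorted/le_total | | ].
    rewrite sorted_pairwise; last exact: le_trans.
    rewrite pairwise_cat -!sorted_pairwise; try exact: le_trans.
    rewrite !sort_sorted ?andbT //; try exact: le_total.
    apply/allrelP => x y; rewrite !mem_sort => /mapP[i + ->] /mapP[j + ->].
    by rewrite !mem_enum !inE => iX /andP[]; apply: lowX.
  by rewrite perm_sort (perm_trans perm_split) // perm_cat // perm_sym perm_sort.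
rewrite /smallest_sum sort_split take_size_cat ?size_sort ?size_map -?cardE //.
by rewrite (perm_big _ (permEl (perm_sort _ _))) big_map big_enum.
Qed.

Lemma cards_swap (X : {set T}) i j :
  i \in X -> j \notin X -> #|j |: (X :\ i)| = #|X|.
Proof.
by move=> iX jX; rewrite cardsU1 in_setD1 negb_and jX orbT (cardsD1 i X) iX.
Qed.

Lemma sum_swap (X : {set T}) i j : i \in X -> j \notin X ->
  \sum_(k in j |: (X :\ i)) p k = \sum_(k in X) p k - p i + p j.
Proof.
move=> iX jX; rewrite big_setU1 /= ?in_setD1 ?negb_and ?jX ?orbT //.
by rewrite [in RHS](big_setD1 i iX) /= addrC [p i + _]addrC addrK.
Qed.

Lemma lowest_of_minimal (X : {set T}) : X \subset g ->
  (forall Y : {set T}, Y \subset g -> #|Y| = #|X| ->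
    \sum_(i in X) p i <= \sum_(i in Y) p i) ->
  lowest X.
Proof.
move=> sXg minX i j iX gj jX; rewrite leNgt; apply/negP => pji.
have sYg : j |: (X :\ i) \subset g.
  apply/subsetP => k; rewrite !inE => /orP[/eqP -> // | /andP[_]].
  exact: (subsetP sXg).
have := minX _ sYg (cards_swap iX jX); rewrite sum_swap //; lra.
Qed.

Lemma exists_minimal k : (k <= #|g|)%N -> exists2 X : {set T}, X \subset g &
  #|X| = k /\ forall Y : {set T}, Y \subset g -> #|Y| = k ->
    \sum_(i in X) p i <= \sum_(i in Y) p i.
Proof.
move=> le_k.
have ex_k : exists X : {set T}, X \subset g /\ #|X| = k.
  exists [set x in take k (enum g)]; split.
    by apply/subsetP => x; rewrite inE => /mem_take; rewrite mem_enum.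
  rewrite cardsE; move/card_uniqP: (take_uniq k (enum_uniq g)) => ->.
  by rewrite size_takel // -cardE.
have [X [sXg cardX] minX] := ex_argmin (fun X : {set T} => \sum_(i in X) p i) ex_k.
by exists X => //; split => // Y sYg cardY; apply: minX.
Qed.

Lemma exists_lowest k : (k <= #|g|)%N ->
  exists2 X : {set T}, X \subset g & #|X| = k /\ lowest X.
Proof.
case/exists_minimal => X sXg [cardX minX]; exists X => //; split => //.
by apply: lowest_of_minimal => // Y sYg; rewrite cardX; apply: minX.
Qed.

Lemma smallest_sum_le (X : {set T}) : X \subset g -> smallest_sum #|X| <= \sum_(i in X) p i.
Proof.
move=> sXg; have [Y sYg [cardY minY]] := exists_minimal (subset_leq_card sXg).
rewrite -cardY smallest_sum_lowest ?minY //.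
by apply: lowest_of_minimal => // Z sZg; rewrite cardY; apply: minY.
Qed.

Lemma lowest_of_sum_le (X : {set T}) : X \subset g ->
  \sum_(i in X) p i <= smallest_sum #|X| -> lowest X.
Proof.
move=> sXg le_sum; apply: lowest_of_minimal => // Y sYg cardY.
by rewrite (le_trans le_sum) // -cardY smallest_sum_le.
Qed.

End SmallestSum.

Section FairnessRepair.
Variables (R : realFieldType) (N : nat) (shat yhat : 'I_N -> bool).
Variables (p : 'I_N -> R) (eps : R).

Local Notation G a b := (inG shat yhat a b).
Local Notation Gset a b := [set i | inG shat yhat a b i].

Definition flips_in (s : 'I_N -> bool) a b : {set 'I_N} :=
  [set i | G a b i & s i != shat i].

Local Notation nflips s a b := #|flips_in s a b|.
Local Notation at_flips P s :=
  (P (nflips s false true) (nflips s true true) (nflips s false false) (nflips s true false)).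
Local Notation feasible := (feasible_RC shat yhat p eps).
Local Notation cost := (cost_RC shat yhat p eps).
Local Notation optimal := (optimal_RC shat yhat p eps).
Local Notation feasibleE := (feasible_RCE shat yhat p eps).
Local Notation costE := (cost_RCE shat yhat p eps).
Local Notation optimalE := (optimal_RCE shat yhat p eps).
Local Notation Phi := (is_Phi shat yhat p eps).
Local Notation ind X i := ((i \in X)%:R : R).

Lemma ncardE a b : ncard shat yhat a b = #|Gset a b|.
Proof. by rewrite cardsE. Qed.

Lemma TsumE a b k : Tsum shat yhat p a b k = smallest_sum p (G a b) k.
Proof. by []. Qed.

Lemma flips_in_sub s a b : flips_in s a b \subset G a b.
Proof. by apply/subsetP => i; rewrite inE => /andP[]. Qed.

Lemma sum_ind (X : {set 'I_N}) : \sum_i ind X i = #|X|%:R.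
Proof.
by rewrite -sumr_const [RHS]big_mkcond; apply: eq_bigr => i _; case: (i \in X).
Qed.

Lemma sum_mul_ind (X : {set 'I_N}) : \sum_i p i * ind X i = \sum_(i in X) p i.
Proof.
by rewrite [RHS]big_mkcond; apply: eq_bigr => i _; case: (i \in X); rewrite ?mulr1 ?mulr0.
Qed.

Local Ltac bit_cases s i :=
  rewrite /b2R !inE /inG; case: (shat i); case: (yhat i); case: (s i) => /=; ring.

Lemma b2R_flips s i : b2R (s i) =
  ind (Gset true true) i + ind (Gset true false) i
  - ind (flips_in s true true) i - ind (flips_in s true false) i
  + ind (flips_in s false true) i + ind (flips_in s false false) i.
Proof. bit_cases s i. Qed.

Lemma b2R_flipsC s i : 1 - b2R (s i) =
  ind (Gset false true) i + ind (Gset false false) i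
  - ind (flips_in s false true) i - ind (flips_in s false false) i
  + ind (flips_in s true true) i + ind (flips_in s true false) i.
Proof. bit_cases s i. Qed.

Lemma b2R_pos_flips s i : b2R (yhat i) * b2R (s i) =
  ind (Gset true true) i - ind (flips_in s true true) i + ind (flips_in s false true) i.
Proof. bit_cases s i. Qed.

Lemma b2R_pos_flipsC s i : b2R (yhat i) * (1 - b2R (s i)) =
  ind (Gset false true) i - ind (flips_in s false true) i + ind (flips_in s true true) i.
Proof. bit_cases s i. Qed.

Lemma cost_term_flips s i :
  p i * (1 - b2R (shat i)) * b2R (s i) + p i * b2R (shat i) * (1 - b2R (s i)) =
  p i * ind (flips_in s false true) i + p i * ind (flips_in s true true) i
  + p i * ind (flips_in s false false) i + p i * ind (flips_in s true false) i.
Proof. bit_cases s i. Qed.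

Lemma feasible_RC_flips s : feasible s <-> at_flips feasibleE s.
Proof.
rewrite /feasible_RC /feasible_RCE /=.
rewrite (eq_bigr _ (fun i _ => b2R_flips s i)) (eq_bigr _ (fun i _ => b2R_flipsC s i)).
rewrite (eq_bigr _ (fun i _ => b2R_pos_flips s i)).
rewrite (eq_bigr _ (fun i _ => b2R_pos_flipsC s i)).
rewrite !big_split /= !sumrN !sum_ind !ncardE.
split=> [[? ? ? ?] | [_ ? ? ? ?]]; split=> //.
by rewrite -!ncardE; apply/and4P; split; exact: subset_leq_card (flips_in_sub _ _ _).
Qed.

Lemma cost_RC_flips s : cost s =
  \sum_(i in flips_in s false true) p i + \sum_(i in flips_in s true true) p i
  + \sum_(i in flips_in s false false) p i + \sum_(i in flips_in s true false) p i.
Proof.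
rewrite /cost_RC -big_split /= (eq_bigr _ (fun i _ => cost_term_flips s i)).
by rewrite !big_split /= !sum_mul_ind.
Qed.

Definition flip_on (Y : {set 'I_N}) i := (i \in Y) (+) shat i.

Lemma flips_in_flip_on Y a b : flips_in (flip_on Y) a b = [set i in Y | G a b i].
Proof. by apply/setP => i; rewrite !inE /flip_on andbC; case: (i \in Y); case: (shat i). Qed.

Lemma flip_on_flips s a b :
  flips_in (flip_on [set i | s i != shat i]) a b = flips_in s a b.
Proof. by apply/setP => i; rewrite flips_in_flip_on !inE andbC. Qed.

Lemma exists_flips (X : bool -> bool -> {set 'I_N}) :
  (forall a b, X a b \subset G a b) -> exists s, forall a b, flips_in s a b = X a b.
Proof.
move=> sX; exists (flip_on [set i | i \in X (shat i) (yhat i)]) => a b.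
apply/setP => i; rewrite flips_in_flip_on !inE.
have -> : (i \in X a b) = (i \in X a b) && G a b i.
  by case: (boolP (i \in X a b)) => // /(subsetP (sX a b)).
by rewrite /inG; case: eqP => [->|]; case: eqP => [->|]; rewrite ?andbF.
Qed.

Lemma phi_group_flips s a b k : phi_group shat yhat p a b k s <->
  nflips s a b = k /\ lowest p (G a b) (flips_in s a b).
Proof.
rewrite /phi_group cardsE; split=> [[-> lowF] | [-> lowF]]; split=> //.
  move=> i j; rewrite !inE => /andP[gi si] gj; rewrite gj negbK => /eqP sj.
  exact: lowF.
by move=> i j gi gj si sj; apply: lowF; rewrite // !inE ?gi ?gj ?si ?sj ?eqxx.
Qed.

Lemma is_Phi_flips k01p k10p k01m k10m s :
  Phi k01p k10p k01m k10m s ->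
  [/\ nflips s false true = k01p, nflips s true true = k10p,
      nflips s false false = k01m, nflips s true false = k10m &
      cost s = costE k01p k10p k01m k10m].
Proof.
case=> /phi_group_flips[<- low1] /phi_group_flips[<- low2]
       /phi_group_flips[<- low3] /phi_group_flips[<- low4].
by split=> //; rewrite cost_RC_flips /cost_RCE !TsumE !smallest_sum_lowest ?flips_in_sub.
Qed.

Lemma exists_Phi k01p k10p k01m k10m :
  [&& (k01p <= ncard shat yhat false true)%N, (k10p <= ncard shat yhat true true)%N,
      (k01m <= ncard shat yhat false false)%N & (k10m <= ncard shat yhat true false)%N] ->
  exists s, Phi k01p k10p k01m k10m s.
Proof.
case/and4P=> /(exists_lowest p)[X1 sX1 [cX1 low1]] /(exists_lowest p)[X2 sX2 [cX2 low2]]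
             /(exists_lowest p)[X3 sX3 [cX3 low3]] /(exists_lowest p)[X4 sX4 [cX4 low4]].
pose X a b := match a, b with
  | false, true => X1 | true, true => X2 | false, false => X3 | true, false => X4 end.
have [|s flipsX] := @exists_flips X; first by case; case.
by exists s; split; apply/phi_group_flips; rewrite flipsX.
Qed.

Lemma cost_RCE_flips_le s : at_flips costE s <= cost s.
Proof.
rewrite cost_RC_flips /cost_RCE !TsumE.
by do 3?apply: lerD; exact: smallest_sum_le (flips_in_sub _ _ _).
Qed.

Lemma feasible_RCE_realized k01p k10p k01m k10m :
  feasibleE k01p k10p k01m k10m ->
  exists s, [/\ Phi k01p k10p k01m k10m s, feasible s & cost s = costE k01p k10p k01m k10m].
Proof.
move=> fk; have [bounds _ _ _ _] := fk.
have [s phis] := exists_Phi bounds; have [e1 e2 e3 e4 cs] := is_Phi_flips phis.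
by exists s; split=> //; apply/feasible_RC_flips; rewrite e1 e2 e3 e4.
Qed.

Lemma optimal_RC_flips s : optimal s -> at_flips optimalE s.
Proof.
case=> fs mins; split=> [|l01p l10p l01m l10m]; first exact/feasible_RC_flips.
case/feasible_RCE_realized => t [_ ft <-].
exact: le_trans (cost_RCE_flips_le s) (mins t ft).
Qed.

Lemma optimal_RCE_Phi k01p k10p k01m k10m s :
  optimalE k01p k10p k01m k10m -> Phi k01p k10p k01m k10m s -> optimal s.
Proof.
case=> fk mink /is_Phi_flips[e1 e2 e3 e4 cs]; split.
  by apply/feasible_RC_flips; rewrite e1 e2 e3 e4.
move=> t /feasible_RC_flips ft; rewrite cs.
exact: le_trans (mink _ _ _ _ ft) (cost_RCE_flips_le t).
Qed.

Lemma optimal_RC_cost s k01p k10p k01m k10m :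
  optimal s -> optimalE k01p k10p k01m k10m -> cost s = costE k01p k10p k01m k10m.
Proof.
case=> fs mins [fk mink]; apply/le_anti/andP; split.
  by have [t [_ ft <-]] := feasible_RCE_realized fk; exact: mins.
by apply: le_trans (cost_RCE_flips_le s); apply: mink; exact/feasible_RC_flips.
Qed.

Lemma optimal_RC_Phi s : optimal s -> at_flips Phi s s.
Proof.
case=> fs mins; have [bounds _ _ _ _] := (feasible_RC_flips s).1 fs.
have [t phit] := exists_Phi bounds; have [e1 e2 e3 e4 ct] := is_Phi_flips phit.
have ft : feasible t by apply/feasible_RC_flips; rewrite e1 e2 e3 e4; exact/feasible_RC_flips.
have := mins t ft; rewrite ct cost_RC_flips /cost_RCE !TsumE => le_cost.
have := smallest_sum_le p (flips_in_sub s false true).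
have := smallest_sum_le p (flips_in_sub s true true).
have := smallest_sum_le p (flips_in_sub s false false).
have := smallest_sum_le p (flips_in_sub s true false).
move=> L10m L01m L10p L01p.
split; apply/phi_group_flips; split=> //; apply: lowest_of_sum_le (flips_in_sub _ _ _) _; lra.
Qed.

Lemma exists_optimal_RC : (exists s, feasible s) -> exists s, optimal s.
Proof.
have feasible_flip s : feasible s -> feasible (flip_on [set i | s i != shat i]).
  by rewrite !feasible_RC_flips !flip_on_flips.
have cost_flip s : cost (flip_on [set i | s i != shat i]) = cost s.
  by rewrite !cost_RC_flips !flip_on_flips.
case=> s0 /feasible_flip fs0.
have [Y fY minY] := ex_argmin (fun Y => cost (flip_on Y))
  (ex_intro (fun Y => feasible (flip_on Y)) _ fs0).
by exists (flip_on Y); split=> // s /feasible_flip fs; rewrite -[cost s]cost_flip; exact: minY.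
Qed.

End FairnessRepair.

Theorem theorem1 (R : realFieldType) (N : nat) (shat yhat : 'I_N -> bool)
    (p : 'I_N -> R) (eps : R) :
  (0 < N)%N -> (forall i, 0 <= p i) -> 0 <= eps ->
  [/\
    ((exists s, feasible_RC shat yhat p eps s) <->
     (exists k01p k10p k01m k10m,
        feasible_RCE shat yhat p eps k01p k10p k01m k10m)),
    ((exists s, feasible_RC shat yhat p eps s) ->
       (exists s, optimal_RC shat yhat p eps s) /\
       (exists k01p k10p k01m k10m,
          optimal_RCE shat yhat p eps k01p k10p k01m k10m)),
    (forall s k01p k10p k01m k10m,
       optimal_RC shat yhat p eps s ->
       optimal_RCE shat yhat p eps k01p k10p k01m k10m ->
       cost_RC shat yhat p eps s = cost_RCE shat yhat p eps k01p k10p k01m k10m),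
    (forall k01p k10p k01m k10m s,
       optimal_RCE shat yhat p eps k01p k10p k01m k10m ->
       is_Phi shat yhat p eps k01p k10p k01m k10m s ->
       optimal_RC shat yhat p eps s)
  & (forall s, optimal_RC shat yhat p eps s ->
       exists k01p k10p k01m k10m,
         optimal_RCE shat yhat p eps k01p k10p k01m k10m /\
         is_Phi shat yhat p eps k01p k10p k01m k10m s)].
Proof.
move=> _ _ _; split.
- split=> [[s /feasible_RC_flips fs] | [k01p [k10p [k01m [k10m]]]]].
    by do 4 eexists; exact: fs.
  by case/feasible_RCE_realized => s [_ fs _]; exists s.
- case/exists_optimal_RC => s os; split; first by exists s.
  by do 4 eexists; exact: optimal_RC_flips os.
- exact: optimal_RC_cost.
- exact: optimal_RCE_Phi.
- move=> s os; do 4 eexists.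
  by split; [exact: optimal_RC_flips os | exact: optimal_RC_Phi os].
Qed.
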